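(* In the setting described in the context, the discrete contact force density $\lambda^h=(\lambda^h_1,\lambda^h_2)\in Q^h$ satisfies $$\lambda^h_1(p)\ge 0\quad\text{and}\quad \lambda^h_2(p)=0\qquad\forall p\in\mathcal{V}_h^C\cup\mathcal{M}_h^C.$$
   Context: Let $\Omega\subset\mathbb{R}^2$ be a bounded polygonal Lipschitz domain with boundary partitioned into relatively open, pairwise disjoint parts $\Gamma_D,\Gamma_N,\Gamma_C$, $\mathrm{meas}(\Gamma_D)>0$, $\overline{\Gamma_C}\subset\partial\Omega\setminus\overline{\Gamma_D}$, outward unit normal on $\Gamma_C$ equal to $e_1=(1,0)$. Let $\sigma(v)=\chi\,\mathrm{tr}(\epsilon(v))I+2\mu\epsilon(v)$ ($\chi,\mu>0$, $\epsilon(v)=\frac12(\nabla v+\nabla v^T)$), $a(w,v)=\int_\Omega\sigma(w):\epsilon(v)\,dx$, $L(v)=\int_\Omega f\cdot v\,dx+\int_{\Gamma_N}g\cdot v\,ds$ with $f\in[L^2(\Omega)]^2$, $g\in[L^2(\Gamma_N)]^2$. Let $\mathcal{T}_h$ be a regular triangulation of $\Omega$ (each of $\Gamma_D,\Gamma_N,\Gamma_C$ a union of mesh edges). $\mathcal{V}_h$ and $\mathcal{M}_h$ are the sets of vertices and edge midpoints; $\mathcal{V}_h^C$ = vertices in $\overline{\Gamma_C}$, $\mathcal{M}_h^C$ = midpoints of edges on $\Gamma_C$; $\mathcal{V}_h^D,\mathcal{M}_h^D$ analogously for $\Gamma_D$; $\mathcal{V}_h^o=\mathcal{V}_h\setminus\mathcal{V}_h^D$,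 $\mathcal{M}_h^o=\mathcal{M}_h\setminus\mathcal{M}_h^D$. $V^h=\{v\in[C(\overline\Omega)]^2: v|_T\in[P_2(T)]^2\ \forall T\in\mathcal{T}_h,\ v=0\text{ on }\Gamma_D\}$, with scalar quadratic Lagrange nodal basis $\psi_z$, $z\in\mathcal{V}_h^o\cup\mathcal{M}_h^o$. $\mathcal{K}^h=\{v^h=(v^h_1,v^h_2)\in V^h: v^h_1(z)\le0\ \forall z\in\mathcal{V}_h^C\cup\mathcal{M}_h^C\}$ and $u^h\in\mathcal{K}^h$ solves $a(u^h,v^h-u^h)\ge L(v^h-u^h)$ for all $v^h\in\mathcal{K}^h$. Split each edge of $\Gamma_C$ at its midpoint into two halves; $Q^h$ is the space of continuous $\mathbb{R}^2$-valued functions on $\overline{\Gamma_C}$ that are affine on each half, and $\phi_z$ ($z\in\mathcal{V}_h^C\cup\mathcal{M}_h^C$) are the scalar continuous piecewise affine nodal basis functions on this subdivision ($\phi_z(p)=\delta_{zp}$). For a node $z$, $\omega_z$ is the union of elements sharing $z$ and $\gamma_{z,C}=\partial\omega_z\cap\Gamma_C$. Define $\pi_h:Q^h\to V^h$ by $\pi_h v=\sum_{z\in\mathcal{V}_h^C\cup\mathcal{M}_h^C}\sum_{i=1}^2 v_i(z)\psi_z e_i$, the inner product $\langle w,v\rangle_h=\sum_{z\in\mathcal{V}_h^C\cup\mathcal{M}_h^C}w(z)\cdot v(z)\int_{\gamma_{z,C}}\phi_z\,ds$ on $Q^h$, and the discrete contact force density $\lambda^h\in Q^h$ by $\langle\lambda^h,v^h\rangle_h=L(\pi_hv^h)-a(u^h,\pi_hv^h)$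 for all $v^h\in Q^h$. *)

(* Finite-element setting of the paper: P2 Lagrange elements on a conforming
   triangulation of a polygonal domain in R^2, frictionless contact on Gamma_C. *)
From HB Require Import structures.
From mathcomp Require Import all_boot all_order all_algebra.
From mathcomp Require Import all_classical all_reals all_analysis.
Import Order.TTheory GRing.Theory Num.Theory numFieldNormedType.Exports.

Set Implicit Arguments.
Unset Strict Implicit.
Unset Printing Implicit Defensive.

Local Open Scope classical_set_scope.
Local Open Scope ring_scope.

Section FEM.
Context {R : realType}.

Definition pt := (R * R)%type.

Definition mu2 := ((@lebesgue_measure R) \x (@lebesgue_measure R))%E.

Definition dotp (p q : pt) : R := p.1 * q.1 + p.2 * q.2.
Definition pnorm (p : pt) : R := Num.sqrt (p.1 ^+ 2 + p.2 ^+ 2).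
Definition coord (i : 'I_2) (p : pt) : R := if i == ord0 then p.1 else p.2.

Definition boundary (A : set pt) : set pt := closure A `\` interior A.

Definition tri := (pt * pt * pt)%type.
Definition tri_vertices (T : tri) : seq pt := [:: T.1.1; T.1.2; T.2].
Definition tri_set (T : tri) : set pt :=
  [set x | exists l1 l2 l3 : R, [/\ 0 <= l1, 0 <= l2, 0 <= l3,
     l1 + l2 + l3 = 1 & x = l1 *: T.1.1 + l2 *: T.1.2 + l3 *: T.2]].
Definition det2 (p q : pt) : R := p.1 * q.2 - p.2 * q.1.
Definition nondegenerate (T : tri) : Prop :=
  det2 (T.1.2 - T.1.1) (T.2 - T.1.1) != 0.
Definition tri_edges (T : tri) : seq (pt * pt) :=
  [:: (T.1.1, T.1.2); (T.1.2, T.2); (T.2, T.1.1)].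
Definition seg (e : pt * pt) : set pt :=
  [set x | exists2 t : R, 0 <= t <= 1 & x = e.1 + t *: (e.2 - e.1)].
Definition midp (e : pt * pt) : pt := 2^-1 *: (e.1 + e.2).
Definition tri_nodes (T : tri) : seq pt :=
  tri_vertices T ++ map midp (tri_edges T).

Definition mesh := seq tri.
Definition mesh_vertices (M : mesh) : seq pt := flatten (map tri_vertices M).
Definition mesh_edges (M : mesh) : seq (pt * pt) := flatten (map tri_edges M).
Definition mesh_midpoints (M : mesh) : seq pt := map midp (mesh_edges M).

Definition tri0 : tri := ((0, 0), (0, 0), (0, 0)).

Definition conforming (M : mesh) : Prop :=
  forall i j : nat, (i < size M)%N -> (j < size M)%N -> i != j ->
  let Ti := nth tri0 M i in let Tj := nth tri0 M j in
  let I := tri_set Ti `&` tri_set Tj in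
  [\/ I = set0,
      (exists v, [/\ v \in tri_vertices Ti, v \in tri_vertices Tj & I = [set v]])
    | (exists v w, [/\ v != w, v \in tri_vertices Ti /\ v \in tri_vertices Tj,
        w \in tri_vertices Ti /\ w \in tri_vertices Tj & I = seg (v, w)])].

Definition triangulation (O : set pt) (M : mesh) : Prop :=
  [/\ (forall T, T \in M -> nondegenerate T),
      conforming M &
      closure O = \bigcup_(T in [set T | T \in M]) tri_set T].

Definition bounded_dom (O : set pt) : Prop :=
  exists C : R, forall x, O x -> `|x.1| <= C /\ `|x.2| <= C.

(* Lipschitz domain: near each boundary point, in suitably rotated
   coordinates, O is the region strictly below the graph of a Lipschitz fn *)
Definition lipschitz_domain (O : set pt) : Prop :=
  forall x, boundary O x ->
  exists r c s : R, exists gam : R -> R,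
  [/\ 0 < r, c ^+ 2 + s ^+ 2 = 1,
      (exists L : R, forall a b, `|gam a - gam b| <= L * `|a - b|) &
      (forall y : pt, pnorm (y - x) < r ->
        (O y <-> - s * (y - x).1 + c * (y - x).2 < gam (c * (y - x).1 + s * (y - x).2)))].

Definition rel_open_bd (O G : set pt) : Prop :=
  G `<=` boundary O /\ exists U : set pt, open U /\ G = U `&` boundary O.

Definition boundary_partition (O GD GN GC : set pt) : Prop :=
  [/\ rel_open_bd O GD, rel_open_bd O GN, rel_open_bd O GC,
      [/\ GD `&` GN = set0, GD `&` GC = set0 & GN `&` GC = set0] &
      boundary O = closure GD `|` closure GN `|` closure GC].

Definition union_of_edges (M : mesh) (G : set pt) : Prop :=
  closure G =
  \bigcup_(e in [set e | e \in mesh_edges M /\ seg e `<=` closure G]) seg e.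

(* outward unit normal equal to e1 = (1,0) at every point of GC *)
Definition outward_normal_e1 (O GC : set pt) : Prop :=
  forall x, GC x -> exists2 r : R, 0 < r &
    forall y : pt, pnorm (y - x) < r -> (O y <-> y.1 < x.1).

Definition lexle (a b : pt) : bool := (a.1 < b.1) || ((a.1 == b.1) && (a.2 <= b.2)).
Definition nedge (e : pt * pt) : pt * pt := if lexle e.1 e.2 then e else (e.2, e.1).
(* boundary edges of the mesh, each counted once *)
Definition bedges (M : mesh) (O : set pt) : seq (pt * pt) :=
  undup [seq nedge e | e <- [seq e <- mesh_edges M | `[< seg e `<=` boundary O >]]].
Definition I01 : set R := `[0, 1].
Definition epar (e : pt * pt) (t : R) : pt := e.1 + t *: (e.2 - e.1).
Definition lint (e : pt * pt) (h : pt -> R) : R :=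
  pnorm (e.2 - e.1) * \int[lebesgue_measure]_(t in `[0, 1]) h (epar e t).
(* \int_S h ds for S a subset of the boundary of O *)
Definition bint (M : mesh) (O S : set pt) (h : pt -> R) : R :=
  \sum_(e <- bedges M O) lint e (fun x => \1_S x * h x).

Definition L2dom (O : set pt) (h : pt -> R) : Prop :=
  measurable_fun O h /\ (\int[mu2]_(x in O) ((h x) ^+ 2)%:E < +oo)%E.
Definition L2bd (M : mesh) (O G : set pt) (h : pt -> R) : Prop :=
  forall e, e \in bedges M O -> seg e `<=` closure G ->
    measurable_fun I01 (fun t : R => h (epar e t)) /\
    (\int[lebesgue_measure]_(t in I01) ((h (epar e t)) ^+ 2)%:E < +oo)%E.

Definition pd (j : 'I_2) (h : pt -> R) (x : pt) : R :=
  if j == ord0 then derive1 (fun t => h (t, x.2)) x.1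
  else derive1 (fun t => h (x.1, t)) x.2.
Definition eps (v : pt -> pt) (x : pt) : 'M[R]_2 :=
  \matrix_(i < 2, j < 2) ((pd j (coord i \o v) x + pd i (coord j \o v) x) / 2).
Definition sigma (chi mu : R) (w : pt -> pt) (x : pt) : 'M[R]_2 :=
  (chi * \tr (eps w x)) *: 1%:M + (2 * mu) *: eps w x.
Definition ddot (A B : 'M[R]_2) : R := \sum_(i < 2) \sum_(j < 2) A i j * B i j.

Definition aform (O : set pt) (chi mu : R) (w v : pt -> pt) : R :=
  \int[mu2]_(x in O) ddot (sigma chi mu w x) (eps v x).
Definition Lform (M : mesh) (O GN : set pt) (f g v : pt -> pt) : R :=
  \int[mu2]_(x in O) dotp (f x) (v x) + bint M O GN (fun x => dotp (g x) (v x)).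

Definition isP2 (S : set pt) (h : pt -> R) : Prop :=
  exists c0 c1 c2 c3 c4 c5 : R, forall x, S x ->
    h x = c0 + c1 * x.1 + c2 * x.2 + c3 * x.1 ^+ 2 + c4 * (x.1 * x.2) + c5 * x.2 ^+ 2.

Definition Vh_scal (M : mesh) (O GD : set pt) (h : pt -> R) : Prop :=
  [/\ (forall T, T \in M -> isP2 (tri_set T) h),
      {within closure O, continuous h} &
      forall x, GD x -> h x = 0].
Definition Vh (M : mesh) (O GD : set pt) (v : pt -> pt) : Prop :=
  [/\ (forall T, T \in M -> isP2 (tri_set T) (fun x => (v x).1) /\
                          isP2 (tri_set T) (fun x => (v x).2)),
      {within closure O, continuous v} &
      forall x, GD x -> v x = 0].

Definition edges_on (M : mesh) (G : set pt) : seq (pt * pt) :=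
  [seq e <- mesh_edges M | `[< seg e `<=` closure G >]].
(* V_h^C \cup M_h^C, without repetitions *)
Definition cnodes (M : mesh) (GC : set pt) : seq pt :=
  undup ([seq p <- mesh_vertices M | `[< closure GC p >]] ++
         map midp (edges_on M GC)).
Definition free_node (M : mesh) (GD : set pt) (p : pt) : Prop :=
  (p \in mesh_vertices M /\ ~ closure GD p) \/
  (p \in mesh_midpoints M /\ p \notin map midp (edges_on M GD)).

Definition Kh (M : mesh) (O GD GC : set pt) (v : pt -> pt) : Prop :=
  Vh M O GD v /\ forall z, z \in cnodes M GC -> (v z).1 <= 0.

Definition affine_on (a b : pt) (q : pt -> pt) : Prop :=
  exists al be : pt, forall t : R, 0 <= t <= 1 -> q (a + t *: (b - a)) = al + t *: be.
Definition affine_on_scal (a b : pt) (q : pt -> R) : Prop :=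
  exists al be : R, forall t : R, 0 <= t <= 1 -> q (a + t *: (b - a)) = al + t * be.
Definition Qh (M : mesh) (GC : set pt) (q : pt -> pt) : Prop :=
  {within closure GC, continuous q} /\
  forall e, e \in edges_on M GC -> affine_on e.1 (midp e) q /\ affine_on (midp e) e.2 q.
Definition Qh_scal (M : mesh) (GC : set pt) (q : pt -> R) : Prop :=
  {within closure GC, continuous q} /\
  forall e, e \in edges_on M GC ->
    affine_on_scal e.1 (midp e) q /\ affine_on_scal (midp e) e.2 q.

Definition omega (M : mesh) (z : pt) : set pt :=
  \bigcup_(T in [set T | T \in M /\ z \in tri_nodes T]) tri_set T.
Definition gammaC (M : mesh) (GC : set pt) (z : pt) : set pt :=
  boundary (omega M z) `&` GC.

Definition iph (M : mesh) (O GC : set pt) (phi : pt -> pt -> R) (w v : pt -> pt) : R :=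
  \sum_(z <- cnodes M GC) dotp (w z) (v z) * bint M O (gammaC M GC z) (phi z).
Definition pih (M : mesh) (GC : set pt) (psi : pt -> pt -> R) (v : pt -> pt) : pt -> pt :=
  fun x => \sum_(z <- cnodes M GC) psi z x *: v z.

End FEM.

(* Testing the definition of [lam] with [q = phi_p k] gives
   [<lam, q>_h = (lam(p) . k) w_p], where [w_p] is the integral of [phi_p] over
   [gamma_{p,C}], because [q] vanishes at the other contact nodes.  When
   [k.1 <= 0], [u + pi_h q] is still in [K^h], as [pi_h q] has nodal values [q]
   on the contact nodes; so the variational inequality makes
   [L(pi_h q) - a(u, pi_h q) = (lam(p) . k) w_p] nonpositive, and the choices
   [k = (-1, 0), (0, 1), (0, -1)] give the claim once [w_p > 0].
   For the positivity of [w_p]: [p] lies on a contact edge [e] of an element of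
   which it is a node, and [phi_p > 1/2] near [p].  The Lipschitz boundary is
   locally the line of [e] and [Gamma_C] is relatively open in the boundary, so
   [Gamma_C] contains a subsegment of [e] near [p]; this subsegment lies on the
   boundary of [omega_p] because the outward normal [e1] leaves no point of the
   closed domain just to the right of [Gamma_C]. *)

From Pilot Require Import Defs.
From HB Require Import structures.
From mathcomp Require Import all_boot all_order all_algebra.
From mathcomp Require Import all_classical all_reals all_analysis.
From mathcomp Require Import ring lra.
Import Order.TTheory GRing.Theory Num.Theory numFieldNormedType.Exports.
Local Open Scope classical_set_scope.
Local Open Scope ring_scope.

Set Implicit Arguments.
Unset Strict Implicit.
Unset Printing Implicit Defensive.

Section UnitIntervalIntegral.
Context {R : realType}.
Local Notation leb := (@lebesgue_measure R).

(* No measurability is needed: a nonnegative integral is the supremum of the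
   integrals of the simple functions below the integrand. *)
Lemma ge0_le_integral_subset (D1 D2 : set R) (f g : R -> R) :
  (forall x, D1 x -> 0 <= f x) -> (forall x, D2 x -> 0 <= g x) ->
  (forall x, D1 x -> D2 x /\ f x <= g x) ->
  (\int[leb]_(x in D1) (f x)%:E <= \int[leb]_(x in D2) (g x)%:E)%E.
Proof.
move=> f0 g0 fg.
rewrite !ge0_integralE => [|x Dx|x Dx]; rewrite ?lee_fin ?f0 ?g0 //.
apply: ge_ereal_sup => _ [h hf <-]; apply: ereal_sup_ubound; exists h => // x.
apply: le_trans (hf x) _; rewrite /patch; case: ifP => [/set_mem Dx|_].
  by have [D2x fgx] := fg _ Dx; rewrite ifT ?inE // lee_fin.
by case: ifP => // /set_mem D2x; rewrite lee_fin g0.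
Qed.

(* The bound [g <= 1] keeps the integral finite, so that [Rintegral] (which
   takes [fine] of it) does not send it to 0. *)
Lemma Rintegral01_gt0 (g : R -> R) (a b c : R) :
  (forall t, 0 <= g t <= 1) -> 0 <= a -> a < b -> b <= 1 -> 0 < c ->
  (forall t, a <= t <= b -> c <= g t) ->
  0 < Rintegral leb [set` `[0, 1]] g.
Proof.
move=> g01 a0 ab b1 c0 gc.
have int_ge : ((c * (b - a))%:E <= \int[leb]_(x in [set` `[0%R, 1%R]]) (g x)%:E)%E.
  apply: (@le_trans _ _ (\int[leb]_(x in [set` `[a, b]%R]) c%:E)%E).
    rewrite integral_cst /=; last exact: measurable_itv.
    by rewrite lebesgue_measure_itv /= lte_fin ab -EFinM.
  apply: ge0_le_integral_subset => [x _|x _|x /=]; first exact: ltW.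
    by case/andP: (g01 x).
  rewrite !in_itv /= => /andP[ax xb]; split; last by apply: gc; rewrite ax xb.
  by rewrite (le_trans a0 ax) (le_trans xb b1).
have int_le : (\int[leb]_(x in [set` `[0%R, 1%R]]) (g x)%:E <= 1%:E)%E.
  apply: (@le_trans _ _ (\int[leb]_(x in [set` `[0%R, 1%R]]) 1%:E)%E).
    apply: ge0_le_integral_subset => [x _|//|x Hx]; first by case/andP: (g01 x).
    by split; [exact: Hx|case/andP: (g01 x)].
  rewrite integral_cst /=; last exact: measurable_itv.
  by rewrite lebesgue_measure_itv /= lte_fin ltr01 oppr0 adde0 mul1e.
have int_ge0 : (0 <= \int[leb]_(x in [set` `[0%R, 1%R]]) (g x)%:E)%E.
  by apply: integral_ge0 => x _; rewrite lee_fin; case/andP: (g01 x).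
rewrite /Rintegral; move: int_ge int_le int_ge0.
case: (\int[leb]_(x in _) _)%E => //= r; rewrite lee_fin => r_ge _ _.
by apply: lt_le_trans r_ge; rewrite mulr_gt0 // subr_gt0.
Qed.

End UnitIntervalIntegral.

Section PlaneCoordinates.
Context {R : realType}.
Implicit Types (x y v w : @pt R) (k : R).

Lemma fst_scale k v : (k *: v).1 = k * v.1. Proof. by []. Qed.
Lemma snd_scale k v : (k *: v).2 = k * v.2. Proof. by []. Qed.
Lemma fst_add v w : (v + w).1 = v.1 + w.1. Proof. by []. Qed.
Lemma snd_add v w : (v + w).2 = v.2 + w.2. Proof. by []. Qed.
Lemma fst_sub v w : (v - w).1 = v.1 - w.1. Proof. by []. Qed.
Lemma snd_sub v w : (v - w).2 = v.2 - w.2. Proof. by []. Qed.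
Lemma fst_opp v : (- v).1 = - v.1. Proof. by []. Qed.
Lemma snd_opp v : (- v).2 = - v.2. Proof. by []. Qed.
Lemma scaleRE k (a : R) : k *: a = k * a. Proof. by []. Qed.
Definition ptE := (fst_scale, snd_scale, fst_add, snd_add, fst_sub, snd_sub,
  fst_opp, snd_opp, scaleRE).

Lemma fst_sum (I : Type) (s : seq I) (F : I -> @pt R) :
  (\sum_(i <- s) F i).1 = \sum_(i <- s) (F i).1.
Proof. exact: (big_morph fst (fun _ _ => erefl) erefl). Qed.

Lemma snd_sum (I : Type) (s : seq I) (F : I -> @pt R) :
  (\sum_(i <- s) F i).2 = \sum_(i <- s) (F i).2.
Proof. exact: (big_morph snd (fun _ _ => erefl) erefl). Qed.

Lemma ball_ptE x (e : R) y : ball x e y <-> `|x.1 - y.1| < e /\ `|x.2 - y.2| < e.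
Proof. by rewrite /ball /= /prod_ball -!ball_normE. Qed.

Lemma closure_box (A : set (@pt R)) x (e : R) : closure A x -> 0 < e ->
  exists y, [/\ A y, `|x.1 - y.1| < e & `|x.2 - y.2| < e].
Proof.
by move=> Ax e0; have [y [Ay /ball_ptE[]]] := Ax _ (nbhsx_ballx x _ e0); exists y.
Qed.

Lemma nbhs_box (A : set (@pt R)) x : nbhs x A ->
  exists2 e : R, 0 < e & forall y, `|x.1 - y.1| < e -> `|x.2 - y.2| < e -> A y.
Proof. by case/nbhs_ballP => e e0 Ae; exists e => // y h1 h2; apply/Ae/ball_ptE. Qed.

Lemma within_continuous_box (A : set (@pt R)) (f : @pt R -> R) x (e : R) :
  {within A, continuous f} -> A x -> 0 < e ->
  exists2 d : R, 0 < d & forall y, A y -> `|x.1 - y.1| < d -> `|x.2 - y.2| < d ->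
    `|f x - f y| < e.
Proof.
move=> cf Ax e0; have := (subspace_continuousP _ f).1 cf x Ax.
move/cvgrPdist_lt => /(_ e e0) /nbhs_box[d d0 fd].
by exists d => // y Ay h1 h2; apply: fd.
Qed.

Lemma pnorm_le_l1 v : pnorm v <= `|v.1| + `|v.2|.
Proof.
rewrite /pnorm -[X in _ <= X]ger0_norm ?addr_ge0 // -sqrtr_sqr ler_sqrt ?sqr_ge0 //.
rewrite sqrrD -(real_normK (num_real v.1)) -(real_normK (num_real v.2)).
have : 0 <= `|v.1| * `|v.2| by rewrite mulr_ge0.
lra.
Qed.

Lemma pnorm_gt0 v : v != 0 -> 0 < pnorm v.
Proof.
move=> v0; rewrite /pnorm sqrtr_gt0 lt_neqAle addr_ge0 ?sqr_ge0 // andbT.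
apply: contra v0 => /eqP/esym sum0.
have /eqP : v.1 ^+ 2 = 0 by have := sqr_ge0 v.1; have := sqr_ge0 v.2; lra.
have /eqP : v.2 ^+ 2 = 0 by have := sqr_ge0 v.1; have := sqr_ge0 v.2; lra.
by rewrite !sqrf_eq0 => /eqP v2 /eqP v1; rewrite [v]surjective_pairing v1 v2.
Qed.

End PlaneCoordinates.

Section Segments.
Context {R : realType}.
Implicit Types (e : @pt R * @pt R) (x : @pt R).

Lemma epar_seg e t : 0 <= t <= 1 -> seg e (epar e t).
Proof. by exists t. Qed.

Lemma epar_add e t tau : epar e (t + tau) = epar e t + tau *: (e.2 - e.1).
Proof. by rewrite /epar scalerDl addrA. Qed.

Lemma epar_swap e t : epar (e.2, e.1) t = epar e (1 - t).
Proof. by apply: injective_projections; rewrite /epar !ptE /=; ring. Qed.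

Lemma epar_near e (t t' m : R) :
  `|t - t'| * (`|(e.2 - e.1).1| + `|(e.2 - e.1).2|) < m ->
  `|(epar e t).1 - (epar e t').1| < m /\ `|(epar e t).2 - (epar e t').2| < m.
Proof.
have diff : (epar e t).1 - (epar e t').1 = (t - t') * (e.2 - e.1).1 /\
    (epar e t).2 - (epar e t').2 = (t - t') * (e.2 - e.1).2.
  by rewrite /epar !ptE; split; ring.
move=> lt_m; have [-> ->] := diff; rewrite !normrM.
by split; apply: le_lt_trans lt_m; rewrite ler_wpM2l // ?lerDl ?lerDr.
Qed.

Lemma seg_midp e : seg e (midp e).
Proof.
exists 2^-1; first by apply/andP; split; lra.
by apply: injective_projections; rewrite /midp !ptE; lra.
Qed.

Lemma seg_halves e x : seg e x ->
  (exists2 t, 0 <= t <= 1 & x = e.1 + t *: (midp e - e.1)) \/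
  (exists2 t, 0 <= t <= 1 & x = midp e + t *: (e.2 - midp e)).
Proof.
case=> t /andP[t0 t1] ->; have [th|th] := lerP t 2^-1; [left|right].
  exists (2 * t); first by apply/andP; split; lra.
  by apply: injective_projections; rewrite /midp !ptE; lra.
exists (2 * t - 1); first by apply/andP; split; lra.
by apply: injective_projections; rewrite /midp !ptE; lra.
Qed.

End Segments.

Lemma open_boundary_notin {R : realType} (O : set (@pt R)) z :
  open O -> boundary O z -> ~ O z.
Proof. by move=> oO [_ Oz0] Oz; apply: Oz0; move: oO; rewrite openE; apply. Qed.

Section Rotation.
Context {R : realType}.
Variables c s : R.
Hypothesis cs1 : c ^+ 2 + s ^+ 2 = 1.
Implicit Types v w : @pt R.

Definition rotx v := c * v.1 + s * v.2.
Definition roty v := - s * v.1 + c * v.2.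

Lemma rotxB v w : rotx v - rotx w = rotx (v - w).
Proof. by rewrite /rotx !ptE; ring. Qed.

Lemma rotyB v w : roty v - roty w = roty (v - w).
Proof. by rewrite /roty !ptE; ring. Qed.

Lemma rotxZ k v : rotx (k *: v) = k * rotx v.
Proof. by rewrite /rotx !ptE; ring. Qed.

Lemma rotyZ k v : roty (k *: v) = k * roty v.
Proof. by rewrite /roty !ptE; ring. Qed.

Let norm_comb_le (a b p q : R) : `|a| <= 1 -> `|b| <= 1 ->
  `|a * p + b * q| <= `|p| + `|q|.
Proof.
move=> a1 b1; apply: le_trans (ler_normD _ _) _; rewrite !normrM.
by apply: lerD; rewrite -[X in _ <= X]mul1r; apply: ler_wpM2r.
Qed.

Let norm_c : `|c| <= 1.
Proof. by have := cs1; rewrite ler_norml => cs; apply/andP; split; nra. Qed.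
Let norm_s : `|s| <= 1.
Proof. by have := cs1; rewrite ler_norml => cs; apply/andP; split; nra. Qed.

Lemma norm_rotx_le v : `|rotx v| <= `|v.1| + `|v.2|.
Proof. exact: norm_comb_le. Qed.

Lemma norm_roty_le v : `|roty v| <= `|v.1| + `|v.2|.
Proof. by apply: norm_comb_le; rewrite ?normrN. Qed.

Lemma rot_inj v w : rotx v = rotx w -> roty v = roty w -> v = w.
Proof.
have fstE u : u.1 = c * rotx u - s * roty u.
  by rewrite /rotx /roty -[LHS]mul1r -cs1; ring.
have sndE u : u.2 = s * rotx u + c * roty u.
  by rewrite /rotx /roty -[LHS]mul1r -cs1; ring.
move=> ex ey; apply: injective_projections.
  by rewrite fstE ex ey -fstE.
by rewrite sndE ex ey -sndE.
Qed.

Lemma graph_segment_rotx_neq0 (gam : R -> R) d t0 : d != 0 -> 0 < t0 ->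
  (forall tau, `|tau| < t0 -> roty (tau *: d) = gam (rotx (tau *: d))) ->
  rotx d != 0.
Proof.
move=> d0 t00 graph; apply: contra d0 => /eqP dx0.
have gam0 : gam 0 = 0.
  by have := graph 0; rewrite normr0 rotxZ rotyZ !mul0r => /(_ t00) <-.
have dy0 : roty d = 0.
  have := graph (t0 / 2); rewrite rotxZ rotyZ dx0 mulr0 gam0 ger0_norm; last lra.
  by move=> /(_ ltac:(lra)) /eqP; rewrite mulf_eq0 => /orP[/eqP|/eqP //]; lra.
by apply/eqP/rot_inj; rewrite ?dx0 ?dy0 /rotx /roty /= !mulr0 ?addr0.
Qed.

End Rotation.

Section LipschitzBoundary.
Context {R : realType}.
Variables (O : set (@pt R)) (x : @pt R) (r c s L : R) (gam : R -> R).
Hypotheses (oO : open O) (r0 : 0 < r) (cs1 : c ^+ 2 + s ^+ 2 = 1).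
Hypothesis gamL : forall a b, `|gam a - gam b| <= L * `|a - b|.
Hypothesis O_below : forall y, pnorm (y - x) < r ->
  (O y <-> roty c s (y - x) < gam (rotx c s (y - x))).

Let near_x z y : `|z.1 - x.1| < r / 4 -> `|z.2 - x.2| < r / 4 ->
  `|z.1 - y.1| < r / 4 -> `|z.2 - y.2| < r / 4 -> pnorm (y - x) < r.
Proof.
move=> zx1 zx2 zy1 zy2; apply: le_lt_trans (pnorm_le_l1 _) _; rewrite !ptE.
have := ler_distD z.1 y.1 x.1; have := ler_distD z.2 y.2 x.2.
rewrite (distrC y.1 z.1) (distrC y.2 z.2); lra.
Qed.

(* A boundary point strictly above the graph would be a limit of points of
   [O], which lie below the graph, contradicting the Lipschitz bound. *)
Lemma boundary_on_graph z : boundary O z ->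
  `|z.1 - x.1| < r / 4 -> `|z.2 - x.2| < r / 4 ->
  roty c s (z - x) = gam (rotx c s (z - x)).
Proof.
move=> bz zx1 zx2.
have near_z y : `|z.1 - y.1| < r / 4 -> `|z.2 - y.2| < r / 4 -> pnorm (y - x) < r.
  exact: near_x.
have L0 : 0 <= L.
  by have := gamL 1 0; rewrite subr0 normr1 mulr1; apply: le_trans.
have graph_le : gam (rotx c s (z - x)) <= roty c s (z - x).
  rewrite leNgt; apply/negP => zO; apply: open_boundary_notin oO bz _.
  by apply/O_below => //; apply: near_z; rewrite subrr normr0; have := r0; lra.
apply/eqP; rewrite eq_le graph_le andbT leNgt; apply/negP => above.
set eps := roty c s (z - x) - gam (rotx c s (z - x)).
have eps0 : 0 < eps by rewrite subr_gt0.
pose d := Num.min (r / 4) (eps / (1 + L) / 2).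
have d0 : 0 < d.
  by rewrite lt_min; apply/andP; split; [have := r0; lra|rewrite !divr_gt0 //; lra].
have [z' [Oz' zz1 zz2]] := closure_box bz.1 d0.
move: zz1 zz2; rewrite !lt_min => /andP[zz1r zz1e] /andP[zz2r zz2e].
have below := (O_below (near_z z' zz1r zz2r)).1 Oz'.
set A := `|z.1 - z'.1| + `|z.2 - z'.2|.
have AL : A * (1 + L) < eps.
  by rewrite -ltr_pdivlMr; [rewrite /A; lra|lra].
have zz' : (z - x) - (z' - x) = z - z' by rewrite opprB addrA subrK.
have dy : `|roty c s (z - x) - roty c s (z' - x)| <= A.
  by rewrite rotyB zz'; exact: norm_roty_le.
have dg : `|gam (rotx c s (z - x)) - gam (rotx c s (z' - x))| <= L * A.
  apply: le_trans (gamL _ _) _; apply: ler_wpM2l => //.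
  by rewrite rotxB zz'; exact: norm_rotx_le.
move: dy dg; rewrite /eps in AL *; rewrite !ler_norml => /andP[_ dy] /andP[dg _].
have : A * (1 + L) = A + L * A by ring.
lra.
Qed.

Lemma boundary_near_line (d : @pt R) (rho : R) : d != 0 -> 0 < rho ->
  (forall tau, `|tau| < rho -> boundary O (x + tau *: d)) ->
  exists2 del : R, 0 < del & forall y, boundary O y ->
    `|x.1 - y.1| < del -> `|x.2 - y.2| < del ->
    exists2 tau, `|tau| < rho & y = x + tau *: d.
Proof.
move=> d0 rho0 line_bd.
pose D := `|d.1| + `|d.2| + 1.
have D0 : 0 < D by rewrite /D; have := normr_ge0 d.1; have := normr_ge0 d.2; lra.
pose t0 := Num.min rho (r / (4 * D)).
have t00 : 0 < t0 by rewrite lt_min rho0 /= divr_gt0 //; lra.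
have t0rho : t0 <= rho by rewrite ge_min lexx.
have t0D : t0 * D <= r / 4.
  have : t0 <= r / (4 * D) by rewrite ge_min lexx orbT.
  by rewrite -ler_pdivlMr // invfM mulrA.
have graph tau : `|tau| < t0 ->
    roty c s (tau *: d) = gam (rotx c s (tau *: d)).
  move=> tau_t0.
  have tauD : `|tau| * D < r / 4 by apply: lt_le_trans t0D; rewrite ltr_pM2r.
  have := boundary_on_graph (line_bd _ (lt_le_trans tau_t0 t0rho)).
  have -> : x + tau *: d - x = tau *: d by rewrite addrC addKr.
  apply; rewrite !ptE addrAC subrr add0r normrM;
    apply: le_lt_trans tauD; rewrite ler_wpM2l // /D;
    have := normr_ge0 d.1; have := normr_ge0 d.2; lra.
have dx0 := graph_segment_rotx_neq0 cs1 d0 t00 graph.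
pose del := Num.min (r / 4) (t0 * `|rotx c s d| / 4).
have del0 : 0 < del.
  by rewrite lt_min; apply/andP; split; [have := r0; lra|rewrite !mulr_gt0 ?normr_gt0].
exists del => // y By; rewrite !lt_min => /andP[xy1r xy1] /andP[xy2r xy2].
rewrite (distrC x.1) (distrC x.2) in xy1r xy1 xy2r xy2.
have graph_y := boundary_on_graph By xy1r xy2r.
pose tau := rotx c s (y - x) / rotx c s d.
have tau_t0 : `|tau| < t0.
  rewrite /tau normrM normfV ltr_pdivrMr ?normr_gt0 //.
  apply: le_lt_trans (norm_rotx_le cs1 (y - x)) _; rewrite !ptE.
  have : 0 < t0 * `|rotx c s d| by rewrite mulr_gt0 ?normr_gt0.
  lra.
exists tau; first exact: lt_le_trans tau_t0 t0rho.
have tau_x : rotx c s (tau *: d) = rotx c s (y - x) by rewrite rotxZ divfK.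
suff -> : tau *: d = y - x by rewrite addrC subrK.
apply: (rot_inj cs1 tau_x).
by rewrite graph // tau_x graph_y.
Qed.

End LipschitzBoundary.

Lemma lipschitz_boundary_near_line {R : realType} (O : set (@pt R))
    (x d : @pt R) (rho : R) :
  open O -> lipschitz_domain O -> d != 0 -> 0 < rho ->
  (forall tau, `|tau| < rho -> boundary O (x + tau *: d)) ->
  exists2 del : R, 0 < del & forall y, boundary O y ->
    `|x.1 - y.1| < del -> `|x.2 - y.2| < del ->
    exists2 tau, `|tau| < rho & y = x + tau *: d.
Proof.
move=> oO lip d0 rho0 line_bd.
have bx : boundary O x by have := line_bd 0; rewrite normr0 scale0r addr0; apply.
have [r [c [s [gam [r0 cs1 [L gamL] O_below]]]]] := lip x bx.
exact: (boundary_near_line (c := c) (s := s) oO r0 cs1 gamL O_below d0 rho0 line_bd).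
Qed.

Section ContactBoundary.
Context {R : realType}.
Implicit Types (O GC U A : set (@pt R)) (e : @pt R * @pt R).

Lemma pos_lower_bound (a b c : R) : 0 < a -> 0 < b -> 0 < c ->
  exists d : R, [/\ 0 < d, d <= a, d <= b & d <= c].
Proof.
move=> a0 b0 c0; exists (Num.min a (Num.min b c)).
by rewrite !lt_min a0 b0 c0 !ge_min !lexx /= !orbT.
Qed.

(* Just to the right of a contact point there is no point of [closure O]. *)
Lemma contact_not_interior O GC A x :
  outward_normal_e1 O GC -> A `<=` closure O -> GC x -> ~ A° x.
Proof.
move=> normal AO GCx /nbhs_box[e e0 Ae].
have [r r0 O_left] := normal x GCx.
pose t := Num.min e r / 4.
have t0 : 0 < t by rewrite divr_gt0 // lt_min e0.
have te : t < e by have := ge_min e e r; rewrite lexx /= /t; lra.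
have tr : 3 * t < r by have := ge_min r e r; rewrite lexx orbT /t; lra.
have A_right : A (x.1 + t, x.2).
  by apply: Ae; rewrite /= ?subrr ?normr0 // opprD addNKr normrN gtr0_norm.
have [y [Oy /= xy1 xy2]] := closure_box (AO _ A_right) t0.
move: xy1 xy2; rewrite !ltr_norml => /andP[? ?] /andP[? ?].
have y_near : pnorm (y - x) < r.
  apply: le_lt_trans (pnorm_le_l1 _) _; rewrite !ptE.
  have : `|y.1 - x.1| <= 2 * t by rewrite ler_norml; apply/andP; split; lra.
  have : `|y.2 - x.2| <= t by rewrite ler_norml; apply/andP; split; lra.
  lra.
have := (O_left y y_near).1 Oy; lra.
Qed.

(* The Lipschitz boundary is locally the line of a boundary edge, so the
   points of [GC] that approach the edge lie on it. *)
Lemma contact_point_near O GC e (t0 del : R) :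
  open O -> lipschitz_domain O -> GC `<=` boundary O -> e.1 != e.2 ->
  seg e `<=` closure GC -> seg e `<=` boundary O -> 0 <= t0 <= 1 -> 0 < del ->
  exists2 t : R, [/\ 0 <= t, t < 1 & `|t - t0| < del] & GC (epar e t).
Proof.
move=> oO lip GC_bd e12 e_GC e_bd /andP[t00 t01] del0.
have d0 : e.2 - e.1 != 0 by rewrite subr_eq0 eq_sym.
have [k [k0 k4 kdel]] : exists k : R, [/\ 0 < k, k <= 4^-1 & k <= del / 3].
  exists (Num.min 4^-1 (del / 3)); rewrite lt_min !ge_min !lexx ?orbT.
  by split => //; apply/andP; split; lra.
have [tx [tx0 tx1 txk]] : exists tx : R, [/\ 0 < tx, tx < 1 & `|tx - t0| <= k].
  have [t0_small|t0_big] := lerP t0 (2^-1); [exists (t0 + k)|exists (t0 - k)];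
    by split; rewrite ?ler_norml ?opprB; try apply/andP; try split; lra.
have [rho [rho0 rho_tx rho_1tx rho_k]] : exists rho : R,
    [/\ 0 < rho, rho <= tx, rho <= 1 - tx & rho <= k].
  by apply: pos_lower_bound; lra.
have line_bd tau : `|tau| < rho -> boundary O (epar e tx + tau *: (e.2 - e.1)).
  rewrite ltr_norml -epar_add => /andP[? ?].
  by apply/e_bd/epar_seg; apply/andP; split; lra.
have [r r0 near_line] := lipschitz_boundary_near_line oO lip d0 rho0 line_bd.
have x_GC : closure GC (epar e tx) by apply/e_GC/epar_seg; apply/andP; split; lra.
have [y [GCy xy1 xy2]] := closure_box x_GC r0.
have [tau tau_rho yE] := near_line y (GC_bd _ GCy) xy1 xy2.
exists (tx + tau); last by rewrite epar_add -yE.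
move: tau_rho txk; rewrite ltr_norml ler_norml => /andP[? ?] /andP[? ?].
by split; rewrite ?ltr_norml; try apply/andP; try split; lra.
Qed.

Lemma contact_subsegment O GC U e (t del : R) :
  open U -> GC = U `&` boundary O -> seg e `<=` boundary O ->
  0 <= t -> t < 1 -> GC (epar e t) -> 0 < del ->
  exists2 b : R, [/\ t < b, b <= 1 & b < t + del] &
    forall t', t <= t' <= b -> GC (epar e t').
Proof.
move=> oU GCE e_bd t0 t1 GCt del0.
have [Ut _] : U (epar e t) /\ boundary O (epar e t) by move: GCt; rewrite GCE.
have [m m0 Um] : exists2 m : R, 0 < m & forall y, `|(epar e t).1 - y.1| < m ->
    `|(epar e t).2 - y.2| < m -> U y.
  by apply: nbhs_box; move: oU; rewrite openE; apply.
pose S := `|(e.2 - e.1).1| + `|(e.2 - e.1).2|.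
have S0 : 0 <= S by rewrite addr_ge0.
have [h [h0 hm h1 hdel]] : exists h : R,
    [/\ 0 < h, h <= m / (S + 1), h <= 1 - t & h <= del / 2].
  by apply: pos_lower_bound; rewrite ?divr_gt0 //; lra.
have hSm : h * (S + 1) <= m by rewrite -ler_pdivlMr //; lra.
exists (t + h); first by split; lra.
move=> t' /andP[tt' t'h]; rewrite GCE; split; last first.
  by apply/e_bd/epar_seg; apply/andP; split; lra.
have [near1 near2] : `|(epar e t).1 - (epar e t').1| < m /\
    `|(epar e t).2 - (epar e t').2| < m.
  apply: epar_near; apply: le_lt_trans (_ : h * S < m).
    by apply: ler_wpM2r => //; rewrite distrC ger0_norm; lra.
  have : h * (S + 1) = h * S + h by ring.
  lra.
exact: Um.
Qed.

End ContactBoundary.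

Section MeshCombinatorics.
Context {R : realType}.
Implicit Types (T : @tri R) (M : @mesh R) (G : set (@pt R)).
Implicit Types (e : @pt R * @pt R) (p v w z : @pt R).

Lemma seg_sub_tri T e : e \in tri_edges T -> seg e `<=` tri_set T.
Proof.
case: T => [[A B] C]; rewrite /tri_edges /= !inE => /or3P[]/eqP-> x [t /andP[t0 t1] ->];
  [exists (1 - t), t, 0|exists 0, (1 - t), t|exists t, 0, (1 - t)];
  by split; [lra|lra|lra|lra|apply: injective_projections; rewrite /= !ptE /=; ring].
Qed.

Lemma tri_set_vertex T v : v \in tri_vertices T -> tri_set T v.
Proof.
case: T => [[A B] C]; rewrite /tri_vertices /= !inE => /or3P[]/eqP->;
  [exists 1, 0, 0|exists 0, 1, 0|exists 0, 0, 1];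
  by split; [lra|lra|lra|lra|rewrite !scale0r ?scale1r ?addr0 ?add0r].
Qed.

Lemma tri_edge_neq T e : Defs.nondegenerate T -> e \in tri_edges T -> e.1 != e.2.
Proof.
case: T => [[A B] C]; rewrite /Defs.nondegenerate /tri_edges /= !inE => nd.
by case/or3P => /eqP -> /=; apply: contra nd => /eqP E; rewrite /det2 ?E !ptE;
  apply/eqP; ring.
Qed.

Lemma tri_vertex_on_edge T p v w : Defs.nondegenerate T ->
  p \in tri_vertices T -> v \in tri_vertices T -> w \in tri_vertices T ->
  v != w -> seg (v, w) p -> p = v \/ p = w.
Proof.
case: T => [[A B] C]; rewrite /Defs.nondegenerate /tri_vertices /= !inE => nd.
case/or3P => /eqP ->; case/or3P => /eqP ->; case/or3P => /eqP ->;
  rewrite ?eqxx //= => _; try (by left); try (by right);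
  case=> t _ E; exfalso; move/negP: nd; apply;
  have e1 := f_equal fst E; have e2 := f_equal snd E; rewrite /= ?ptE /= in e1 e2;
  rewrite /det2 ?ptE ?e1 ?e2; apply/eqP; ring.
Qed.

Lemma conforming_vertex M Te Tp p : conforming M ->
  (forall T, T \in M -> Defs.nondegenerate T) -> Te \in M -> Tp \in M ->
  p \in tri_vertices Tp -> tri_set Te p -> p \in tri_vertices Te.
Proof.
move=> conf nd TeM TpM pTp pTe.
have [Ei Ej] := (nth_index tri0 TeM, nth_index tri0 TpM).
have [ij|ij] := eqVneq (index Te M) (index Tp M); first by rewrite -Ei ij Ej.
have pI : (tri_set Te `&` tri_set Tp) p by split => //; exact: tri_set_vertex.
have := conf _ _ _ _ ij; rewrite /= Ei Ej !index_mem => /(_ TeM TpM).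
case=> [I0|[v [vTe _ I1]]|[v [w [vw [vTe vTp] [wTe wTp] I2]]]].
- by rewrite I0 in pI.
- by rewrite I1 in pI; rewrite pI.
- by rewrite I2 in pI; case: (tri_vertex_on_edge (nd _ TpM) pTp vTp wTp vw pI) => ->.
Qed.

Lemma mesh_edgesP M e : e \in mesh_edges M -> exists2 T, T \in M & e \in tri_edges T.
Proof. by case/flattenP => s /mapP[T TM ->] eT; exists T. Qed.

Lemma mesh_verticesP M p :
  p \in mesh_vertices M -> exists2 T, T \in M & p \in tri_vertices T.
Proof. by case/flattenP => s /mapP[T TM ->] pT; exists T. Qed.

Lemma edges_onP M G e :
  reflect (e \in mesh_edges M /\ seg e `<=` closure G) (e \in edges_on M G).
Proof.
rewrite mem_filter andbC.
by apply: (iffP andP) => -[eM /asboolP eG].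
Qed.

Lemma cnodesP M G z : z \in cnodes M G ->
  (z \in mesh_vertices M /\ closure G z) \/
  exists2 e, e \in edges_on M G & z = midp e.
Proof.
rewrite mem_undup mem_cat => /orP[].
  by rewrite mem_filter => /andP[/asboolP Gz zM]; left.
by case/mapP => e eG ->; right; exists e.
Qed.

Lemma edge_on_cnodes M G e : e \in edges_on M G ->
  [/\ e.1 \in cnodes M G, e.2 \in cnodes M G & midp e \in cnodes M G].
Proof.
move=> /[dup] eG /edges_onP[/mesh_edgesP[T TM eT] e_G].
have vM v : v \in tri_vertices T -> v \in mesh_vertices M.
  by move=> vT; apply/flattenP; exists (tri_vertices T); rewrite ?map_f.
have [e1T e2T] : e.1 \in tri_vertices T /\ e.2 \in tri_vertices T.
  move: eT; case: T {TM vM} => [[A B] C]; rewrite /tri_edges /tri_vertices /= !inE.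
  by case/or3P => /eqP -> /=; rewrite !eqxx ?orbT.
rewrite !mem_undup !mem_cat !mem_filter map_f // orbT; split => //;
  rewrite vM // andbT; apply/orP; left; apply/asboolP/e_G.
  by exists 0; [rewrite lexx ler01|rewrite scale0r addr0].
by exists 1; [rewrite lexx ler01|rewrite scale1r addrC subrK].
Qed.

Lemma cnodes_free M GC GD z : (forall x, closure GC x -> ~ closure GD x) ->
  z \in cnodes M GC -> free_node M GD z.
Proof.
move=> GCD /cnodesP[[zM zGC]|[e /edges_onP[eM e_GC] ->]].
  by left; split => //; exact: GCD.
right; split; first exact: map_f.
apply/mapP => -[e' /edges_onP[_ e'_GD] me].
by apply: GCD (e_GC _ (seg_midp e)) _; rewrite me; exact: e'_GD _ (seg_midp e').
Qed.

(* For a vertex [p], conformity makes [p] a vertex of the element of the edge. *)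
Lemma contact_node_edge O M GC p : triangulation O M -> union_of_edges M GC ->
  p \in cnodes M GC -> exists e T, [/\ T \in M, e \in tri_edges T,
    p \in tri_nodes T, e \in edges_on M GC & seg e p].
Proof.
move=> [nd conf _] GC_edges /cnodesP[[pM pGC]|[e eGC ->]].
  move: pGC; rewrite {1}GC_edges => -[e /= [eM e_GC] pe].
  have [Te TeM eTe] := mesh_edgesP eM.
  have [Tp TpM pTp] := mesh_verticesP pM.
  exists e, Te; split => //; last exact/edges_onP.
  rewrite /tri_nodes mem_cat (conforming_vertex conf nd TeM TpM pTp) //.
  exact: seg_sub_tri eTe _ pe.
have /edges_onP[/mesh_edgesP[T TM eT] _] := eGC.
exists e, T; split => //; last exact: seg_midp.
by rewrite /tri_nodes mem_cat map_f ?orbT.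
Qed.

End MeshCombinatorics.

Section BoundaryIntegral.
Context {R : realType}.
Implicit Types (M : @mesh R) (O S : set (@pt R)) (e : @pt R * @pt R).

Lemma bint_gt0 M O S (h : @pt R -> R) e (a b c : R) :
  (forall x, 0 <= \1_S x * h x <= 1) ->
  e \in mesh_edges M -> seg e `<=` boundary O -> e.1 != e.2 ->
  0 <= a -> a < b -> b <= 1 -> 0 < c ->
  (forall t, a <= t <= b -> c <= \1_S (epar e t) * h (epar e t)) ->
  0 < bint M O S h.
Proof.
move=> h01 eM e_bd e12 a0 ab b1 c0 h_ge.
have eB : nedge e \in bedges M O.
  by rewrite mem_undup map_f // mem_filter eM andbT; apply/asboolP.
rewrite /bint (big_rem _ eB) /=.
have rest_ge0 : 0 <= \sum_(e' <- rem (nedge e) (bedges M O))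
    lint e' (fun x => \1_S x * h x).
  apply: sumr_ge0 => e' _; apply: mulr_ge0; first exact: sqrtr_ge0.
  by apply: Rintegral_ge0 => t _; case/andP: (h01 (epar e' t)).
suff : 0 < lint (nedge e) (fun x => \1_S x * h x) by lra.
have d0 : e.2 - e.1 != 0 by rewrite subr_eq0 eq_sym.
rewrite /lint /nedge; case: ifP => _; apply: mulr_gt0.
- exact: pnorm_gt0.
- exact: (Rintegral01_gt0 (fun t => h01 _) a0 ab b1 c0).
- by apply: pnorm_gt0; rewrite /= subr_eq0.
apply: (Rintegral01_gt0 (a := 1 - b) (b := 1 - a) (fun t => h01 _) _ _ _ c0);
  [lra|lra|lra|].
by move=> t /andP[? ?]; rewrite epar_swap; apply: h_ge; apply/andP; split; lra.
Qed.

End BoundaryIntegral.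

Section DiscreteSpaces.
Context {R : realType}.
Implicit Types (S A : set (@pt R)) (M : @mesh R) (GC : set (@pt R)).

Lemma isP2_ext S h h' : isP2 S h -> h =1 h' -> isP2 S h'.
Proof.
move=> [c0 [c1 [c2 [c3 [c4 [c5 hE]]]]]] hh'.
by exists c0, c1, c2, c3, c4, c5 => x Sx; rewrite -hh' hE.
Qed.

Lemma isP2D S h h' : isP2 S h -> isP2 S h' -> isP2 S (fun x => h x + h' x).
Proof.
move=> [c0 [c1 [c2 [c3 [c4 [c5 hE]]]]]] [d0 [d1 [d2 [d3 [d4 [d5 h'E]]]]]].
exists (c0 + d0), (c1 + d1), (c2 + d2), (c3 + d3), (c4 + d4), (c5 + d5).
by move=> x Sx; rewrite hE // h'E //; ring.
Qed.

Lemma isP2Mr S h (k : R) : isP2 S h -> isP2 S (fun x => h x * k).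
Proof.
move=> [c0 [c1 [c2 [c3 [c4 [c5 hE]]]]]].
exists (c0 * k), (c1 * k), (c2 * k), (c3 * k), (c4 * k), (c5 * k).
by move=> x Sx; rewrite hE //; ring.
Qed.

Lemma isP2_sum S (I : eqType) (s : seq I) (F : I -> @pt R -> R) :
  (forall i, i \in s -> isP2 S (F i)) -> isP2 S (fun x => \sum_(i <- s) F i x).
Proof.
elim: s => [|i s IHs] F_P2.
  by exists 0, 0, 0, 0, 0, 0 => x _; rewrite big_nil; ring.
apply: (@isP2_ext _ (fun x => F i x + \sum_(j <- s) F j x)).
  by apply: isP2D; [apply: F_P2; rewrite mem_head|apply: IHs => j js;
    apply: F_P2; rewrite inE js orbT].
by move=> x; rewrite big_cons.
Qed.

Lemma within_continuous_sum A (I : eqType) (s : seq I) (F : I -> @pt R -> @pt R) :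
  (forall i, i \in s -> {within A, continuous (F i)}) ->
  {within A, continuous (fun x => \sum_(i <- s) F i x)}.
Proof.
elim: s => [|i s IHs] F_cont.
  under eq_fun do rewrite big_nil; exact: cst_continuous.
under eq_fun do rewrite big_cons.
apply: within_continuousD; first by apply: F_cont; rewrite mem_head.
by apply: IHs => j js; apply: F_cont; rewrite inE js orbT.
Qed.

Lemma within_continuous_scaler A (f : @pt R -> R) (k : @pt R) :
  {within A, continuous f} -> {within A, continuous (fun x => f x *: k)}.
Proof. by move=> cf x; apply: cvgZ; [exact: cf|exact: cvg_cst]. Qed.

Lemma affine_on_scal_01 (q : @pt R -> R) a b : affine_on_scal a b q ->
  0 <= q a <= 1 -> 0 <= q b <= 1 ->
  forall t, 0 <= t <= 1 -> 0 <= q (a + t *: (b - a)) <= 1.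
Proof.
case=> al [be qE] qa qb t /andP[t0 t1].
have qaE : q a = al.
  by have := qE 0; rewrite scale0r addr0 mul0r addr0; apply; rewrite lexx ler01.
have qbE : q b = al + be.
  by have := qE 1; rewrite scale1r addrC subrK mul1r; apply; rewrite ler01 lexx.
rewrite qE ?t0 ?t1 //; move: qa qb; rewrite qaE qbE => /andP[? ?] /andP[? ?].
have -> : al + t * be = (1 - t) * al + t * (al + be) by ring.
apply/andP; split; nra.
Qed.

Lemma Qh_scal_01 M GC (q : @pt R -> R) : union_of_edges M GC ->
  Qh_scal M GC q -> (forall z, z \in cnodes M GC -> 0 <= q z <= 1) ->
  forall x, closure GC x -> 0 <= q x <= 1.
Proof.
move=> GC_edges [_ q_aff] q01 x; rewrite {1}GC_edges => -[e [eM e_GC] xe].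
have eGC : e \in edges_on M GC by apply/edges_onP.
have [aff1 aff2] := q_aff e eGC.
have [e1C e2C mC] := edge_on_cnodes eGC.
by case: (seg_halves xe) => -[t t01 ->]; apply: affine_on_scal_01; rewrite ?q01.
Qed.

End DiscreteSpaces.

Lemma contact_weight_gt0 {R : realType} (O GC : set (@pt R)) (M : @mesh R)
    (q : @pt R -> R) p :
  open O -> lipschitz_domain O -> triangulation O M -> rel_open_bd O GC ->
  union_of_edges M GC -> closure GC `<=` boundary O -> outward_normal_e1 O GC ->
  {within closure GC, continuous q} -> (forall x, closure GC x -> 0 <= q x <= 1) ->
  p \in cnodes M GC -> q p = 1 ->
  0 < bint M O (gammaC M GC p) q.
Proof.
move=> oO lip tri [GC_bd [U [oU GCE]]] GC_edges cl_bd normal q_cont q01 pC qp.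
have [e [T [TM eT pT eGC [tp tp01 pE]]]] := contact_node_edge tri GC_edges pC.
have [nd _ clO] := tri.
have e12 := tri_edge_neq (nd T TM) eT.
have /edges_onP[eM e_GC] := eGC.
have e_bd : seg e `<=` boundary O by move=> x /e_GC /cl_bd.
have pGC : closure GC p by apply: e_GC; exists tp.
have half0 : 0 < 2^-1 :> R by rewrite invr_gt0.
have [eta eta0 q_near] := within_continuous_box q_cont pGC half0.
pose S := `|(e.2 - e.1).1| + `|(e.2 - e.1).2|.
have S0 : 0 < S + 1 by rewrite ltr_wpDl ?addr_ge0.
pose del := eta / (S + 1).
have del2 : 0 < del / 2 by rewrite !divr_gt0.
have [t [t0 t1 ttp] GCt] := contact_point_near oO lip GC_bd e12 e_GC e_bd tp01 del2.
have [b [tb b1 bt] GC_tb] := contact_subsegment oU GCE e_bd t0 t1 GCt del2.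
have omega_cl : omega M p `<=` closure O.
  by move=> x [T' [T'M _] xT']; rewrite clO; exists T'.
apply: (bint_gt0 _ eM e_bd e12 t0 tb b1 half0) => [x|t' /andP[tt' t'b]].
  rewrite indicE; case: (x \in _) / boolP => [/set_mem[_ GCx]|_].
    by rewrite mul1r; apply/q01/subset_closure.
  by rewrite mul0r lexx ler01.
have GCt' : GC (epar e t') by apply: GC_tb; rewrite tt' t'b.
have gamma_t' : gammaC M GC p (epar e t').
  split => //; split; last exact: contact_not_interior normal omega_cl GCt'.
  apply: subset_closure; exists T => //; apply: seg_sub_tri eT _ (epar_seg _ _).
  by apply/andP; split; lra.
rewrite indicE mem_set // mul1r.
have [near1 near2] : `|p.1 - (epar e t').1| < eta /\ `|p.2 - (epar e t').2| < eta.
  have -> : p = epar e tp := pE; apply: epar_near.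
  have tpt' : `|tp - t'| < del.
    move: ttp; rewrite distrC !ltr_norml => /andP[? ?]; apply/andP; split; lra.
  apply: le_lt_trans (_ : del * S < eta).
    by apply: ler_wpM2r; [rewrite addr_ge0|exact: ltW].
  have : del * (S + 1) = eta by rewrite divfK // lt0r_neq0.
  have : del * (S + 1) = del * S + del by ring.
  lra.
have := q_near _ (subset_closure GCt') near1 near2.
by rewrite qp ltr_norml => /andP[? ?]; lra.
Qed.

Section InterpolationOnContactNodes.
Context {R : realType}.
Variables (O GD GC : set (@pt R)) (M : @mesh R) (psi phi : @pt R -> @pt R -> R).
Hypothesis GC_GD : forall x, closure GC x -> ~ closure GD x.
Hypothesis psi_nodal : forall z, free_node M GD z ->
  Vh_scal M O GD (psi z) /\ forall p, free_node M GD p -> psi z p = (p == z)%:R.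
Hypothesis phi_nodal : forall z, z \in cnodes M GC ->
  Qh_scal M GC (phi z) /\ forall p, p \in cnodes M GC -> phi z p = (p == z)%:R.
Implicit Types (u v : @pt R -> @pt R) (p z : @pt R) (k : @pt R).

Let psi_cnode z : z \in cnodes M GC -> Vh_scal M O GD (psi z).
Proof. by move=> zC; exact: (psi_nodal (cnodes_free GC_GD zC)).1. Qed.

Lemma pih_cnode v z : z \in cnodes M GC -> pih M GC psi v z = v z.
Proof.
move=> zC; have psiE z' : z' \in cnodes M GC -> psi z' z = (z == z')%:R.
  by move=> z'C; exact: (psi_nodal (cnodes_free GC_GD z'C)).2 _ (cnodes_free GC_GD zC).
rewrite /pih (bigD1_seq z) ?undup_uniq //= big_seq_cond big1 => [|z' /andP[z'C z'z]].
  by rewrite psiE // eqxx scale1r addr0.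
by rewrite psiE // eq_sym (negbTE z'z) scale0r.
Qed.

Lemma Vh_pih v : Vh M O GD (pih M GC psi v).
Proof.
split.
- move=> T TM.
  have P2 (c : @pt R -> R) :
      isP2 (tri_set T) (fun x => \sum_(z <- cnodes M GC) psi z x * c z).
    by apply: isP2_sum => z zC; apply: isP2Mr; have [P2z _ _] := psi_cnode zC; exact: P2z.
  by split; [apply: isP2_ext (P2 (fun z => (v z).1)) _ => x; rewrite /pih fst_sum
            |apply: isP2_ext (P2 (fun z => (v z).2)) _ => x; rewrite /pih snd_sum].
- apply: within_continuous_sum => z zC; apply: within_continuous_scaler.
  by have [_ cont _] := psi_cnode zC.
- move=> x GDx; rewrite /pih big1_seq // => z zC.
  by have [_ _ ->] := psi_cnode zC; rewrite ?scale0r.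
Qed.

Lemma Kh_add_pih u v : Kh M O GD GC u ->
  (forall z, z \in cnodes M GC -> (v z).1 <= 0) ->
  Kh M O GD GC (fun x => u x + pih M GC psi v x).
Proof.
move=> [[uP2 u_cont u_GD] u_cnodes] v_cnodes.
have [wP2 w_cont w_GD] := Vh_pih v.
split; first split.
- move=> T TM; have [u1 u2] := uP2 T TM; have [w1 w2] := wP2 T TM.
  by split; exact: isP2D.
- exact: (@within_continuousD _ _ _ _ u (pih M GC psi v)).
- by move=> x GDx; rewrite u_GD // w_GD // addr0.
- move=> z zC; rewrite fst_add pih_cnode //.
  by have := u_cnodes z zC; have := v_cnodes z zC; lra.
Qed.

Lemma Qh_nodal p k : p \in cnodes M GC -> Qh M GC (fun x => phi p x *: k).
Proof.
move=> pC; have [[phi_cont phi_aff] _] := phi_nodal pC.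
split; first exact: within_continuous_scaler.
move=> e eC; have [[al [be h1]] [al' [be' h2]]] := phi_aff e eC.
by split; [exists (al *: k), (be *: k)|exists (al' *: k), (be' *: k)] => t t01;
  rewrite ?h1 ?h2 // scalerDl scalerA.
Qed.

Lemma iph_nodal (lam : @pt R -> @pt R) p k : p \in cnodes M GC ->
  iph M O GC phi lam (fun x => phi p x *: k) =
  dotp (lam p) k * bint M O (gammaC M GC p) (phi p).
Proof.
move=> pC; have phiE := (phi_nodal pC).2.
rewrite /iph (bigD1_seq p) ?undup_uniq //= big_seq_cond big1 ?addr0 => [|z /andP[zC zp]].
  by rewrite phiE // eqxx scale1r.
by rewrite phiE // (negbTE zp) scale0r /dotp /= !mulr0 addr0 mul0r.
Qed.

Lemma contact_force_le0 (J : (@pt R -> @pt R) -> R) u lam p k :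
  p \in cnodes M GC -> k.1 <= 0 -> Kh M O GD GC u ->
  (forall v, Kh M O GD GC v -> J (fun x => v x - u x) <= 0) ->
  (forall v, Qh M GC v -> iph M O GC phi lam v = J (pih M GC psi v)) ->
  dotp (lam p) k * bint M O (gammaC M GC p) (phi p) <= 0.
Proof.
move=> pC k1 Ku J_le0 lamE; pose q x := phi p x *: k.
have q_cnodes z : z \in cnodes M GC -> (q z).1 <= 0.
  move=> zC; rewrite /q fst_scale (phi_nodal pC).2 //.
  by case: eqP; rewrite ?mul1r ?mul0r.
rewrite -iph_nodal // lamE; last exact: Qh_nodal.
have := J_le0 _ (Kh_add_pih Ku q_cnodes).
have -> : (fun x => u x + pih M GC psi q x - u x) = pih M GC psi q.
  by apply: funext => x; rewrite addrC addKr.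
by [].
Qed.

End InterpolationOnContactNodes.

Unset Implicit Arguments.

Theorem lemma3p1 (R : realType)
  (O GD GN GC : set (@pt R)) (M : @mesh R) (chi mu : R)
  (f g : @pt R -> @pt R)
  (psi : @pt R -> @pt R -> R) (phi : @pt R -> @pt R -> R)
  (u lam : @pt R -> @pt R) :
  (* the domain and its triangulation *)
  open O -> connected O -> bounded_dom O -> lipschitz_domain O -> triangulation O M ->
  (* the boundary parts *)
  boundary_partition O GD GN GC ->
  union_of_edges M GD -> union_of_edges M GN -> union_of_edges M GC ->
  0 < bint M O GD (fun _ => 1) ->
  closure GC `<=` boundary O `\` closure GD ->
  outward_normal_e1 O GC ->
  (* material parameters and data *)
  0 < chi -> 0 < mu ->
  L2dom O (fun x => (f x).1) -> L2dom O (fun x => (f x).2) ->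
  L2bd M O GN (fun x => (g x).1) -> L2bd M O GN (fun x => (g x).2) ->
  (* psi_z : the scalar quadratic Lagrange nodal basis of V^h *)
  (forall z, free_node M GD z ->
     Vh_scal M O GD (psi z) /\
     forall p, free_node M GD p -> psi z p = (p == z)%:R) ->
  (* phi_z : the scalar piecewise affine nodal basis on the half-edge subdivision *)
  (forall z, z \in cnodes M GC ->
     Qh_scal M GC (phi z) /\
     forall p, p \in cnodes M GC -> phi z p = (p == z)%:R) ->
  (* u^h solves the discrete variational inequality *)
  Kh M O GD GC u ->
  (forall v, Kh M O GD GC v ->
     aform O chi mu u (fun x => v x - u x) >= Lform M O GN f g (fun x => v x - u x)) ->
  (* lambda^h : the discrete contact force density *)
  Qh M GC lam ->
  (forall v, Qh M GC v ->
     iph M O GC phi lam v =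
       Lform M O GN f g (pih M GC psi v) - aform O chi mu u (pih M GC psi v)) ->
  forall p, p \in cnodes M GC -> 0 <= (lam p).1 /\ (lam p).2 = 0.
Proof.
move=> oO _ _ lip tri [_ _ GC_open _ _] _ _ GC_edges _ GC_sub normal _ _ _ _ _ _
  psi_nodal phi_nodal Ku VI _ lam_def p pC.
have GC_GD x : closure GC x -> ~ closure GD x by move/GC_sub => [].
have [phi_Qh phi_val] := phi_nodal p pC.
have w_gt0 : 0 < bint M O (gammaC M GC p) (phi p).
  apply: (contact_weight_gt0 oO lip tri GC_open GC_edges _ normal phi_Qh.1 _ pC).
  - by move=> x /GC_sub[].
  - apply: Qh_scal_01 GC_edges phi_Qh _ => z zC.
    by rewrite phi_val //; case: eqP; rewrite ?lexx ?ler01.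
  - by rewrite phi_val ?eqxx.
have force_le0 k : k.1 <= 0 ->
    dotp (lam p) k * bint M O (gammaC M GC p) (phi p) <= 0.
  move=> k1; apply: (contact_force_le0 GC_GD psi_nodal phi_nodal
    (J := fun v => Lform M O GN f g v - aform O chi mu u v) pC k1 Ku) => [v Kv|v Qv].
    by rewrite /= subr_le0; exact: VI.
  exact: lam_def.
have := force_le0 (-1, 0) (lerN10 _); have := force_le0 (0, 1) (lexx _).
have := force_le0 (0, -1) (lexx _); rewrite /dotp /=.
by split; nra.
Qed.
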